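(* Let $N\ge3$, $\lambda\in\mathbb R$, and let $\mathbf P$ and $V$ be as defined below. Define the planar and non-planar tadpole amplitudes $$A^{\mathrm{pl}}_{x,y}=\frac{\lambda}{N^{3/2}}\sum_{a,b,c,d}\mathbf P_{x,a}\mathbf P_{y,b}\mathbf P_{c,d}V_{a,b,c,d},\qquad A^{\mathrm{np}}_{x,y}=\frac{\lambda}{N^{3/2}}\sum_{a,b,c,d}\mathbf P_{x,a}\mathbf P_{y,c}\mathbf P_{b,d}V_{a,b,c,d},$$ where $x,y,a,b,c,d$ range over $\{1,\dots,N\}^3$. Then $$A^{\mathrm{pl}}=\lambda\frac{(N-2)(4N-1)}{12N^{3/2}(N-1)}\,\mathbf P,\qquad A^{\mathrm{np}}=\lambda\frac{N^2-4}{3N^{3/2}(N-1)}\,\mathbf P,$$ and consequently $2A^{\mathrm{pl}}+A^{\mathrm{np}}=\lambda f_T(N)\mathbf P$ with $f_T(N)=\frac{(N-2)(2N+1)}{2N^{3/2}(N-1)}$, which is $O(N^{-1/2})$ as $N\to\infty$.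
   Context: Multi-indices $a=(a_1,a_2,a_3)\in\{1,\dots,N\}^3$. $\mathbf P$ is the symmetric kernel $\mathbf P_{a,b}=\tfrac13(\delta_{a_1b_1}\delta_{a_2b_2}\delta_{a_3b_3}-\delta_{a_1b_3}\delta_{a_2b_2}\delta_{a_3b_1})+\tfrac16(\delta_{a_1b_2}\delta_{a_2b_1}\delta_{a_3b_3}+\delta_{a_1b_1}\delta_{a_2b_3}\delta_{a_3b_2})-\tfrac16(\delta_{a_1b_2}\delta_{a_2b_3}\delta_{a_3b_1}+\delta_{a_1b_3}\delta_{a_2b_1}\delta_{a_3b_2})+\tfrac1{2(N-1)}(\delta_{a_1b_3}\delta_{a_2a_3}\delta_{b_1b_2}+\delta_{a_1a_2}\delta_{a_3b_1}\delta_{b_2b_3})-\tfrac1{2(N-1)}(\delta_{a_1b_1}\delta_{a_2a_3}\delta_{b_2b_3}+\delta_{a_1a_2}\delta_{a_3b_3}\delta_{b_1b_2})$, the orthogonal projector onto traceless tensors with mixed permutation symmetry (Young tableau with rows $\{1,2\},\{3\}$). The quartic (''complete'' or tetrahedral) vertex kernel is $V_{a,b,c,d}=\delta_{a_3b_1}\delta_{b_3c_1}\delta_{c_3d_1}\delta_{d_3a_1}\delta_{a_2c_2}\delta_{b_2d_2}$, so that $\sum V_{a,b,c,d}T_aT_bT_cT_d=T_{i_1i_2i_3}T_{i_3i_4i_5}T_{i_5i_2i_6}T_{i_6i_4i_1}$. These are the tadpole contributions at first order in $\lambda$ to the two-point function of the model with partition function $\int d\mu_{\mathbf P}(T)\exp\big(\frac{\lambda}{4N^{3/2}}T_{i_1i_2i_3}T_{i_3i_4i_5}T_{i_5i_2i_6}T_{i_6i_4i_1}\big)$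 (adjacent external legs: planar, multiplicity 2; opposite external legs: non-planar, multiplicity 1). *)

From HB Require Import structures.
From mathcomp Require Import all_boot all_order all_algebra.
Unset Printing Implicit Defensive.
Import Order.TTheory GRing.Theory Num.Theory.
Local Open Scope ring_scope.

(* Multi-index a = (a1,a2,a3) in {0..N-1}^3 (0-based version of {1..N}^3). *)
Definition idx (N : nat) : finType := ('I_N * 'I_N * 'I_N)%type.
Definition i1 {N} (a : idx N) : 'I_N := a.1.1.
Definition i2 {N} (a : idx N) : 'I_N := a.1.2.
Definition i3 {N} (a : idx N) : 'I_N := a.2.

Definition dlt {R : rcfType} {N} (i j : 'I_N) : R := (i == j)%:R.

Definition Pker (R : rcfType) (N : nat) (a b : idx N) : R :=
  3^-1 * (dlt (i1 a) (i1 b) * dlt (i2 a) (i2 b) * dlt (i3 a) (i3 b)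
          - dlt (i1 a) (i3 b) * dlt (i2 a) (i2 b) * dlt (i3 a) (i1 b))
  + 6^-1 * (dlt (i1 a) (i2 b) * dlt (i2 a) (i1 b) * dlt (i3 a) (i3 b)
          + dlt (i1 a) (i1 b) * dlt (i2 a) (i3 b) * dlt (i3 a) (i2 b))
  - 6^-1 * (dlt (i1 a) (i2 b) * dlt (i2 a) (i3 b) * dlt (i3 a) (i1 b)
          + dlt (i1 a) (i3 b) * dlt (i2 a) (i1 b) * dlt (i3 a) (i2 b))
  + (2 * (N%:R - 1))^-1 *
      (dlt (i1 a) (i3 b) * dlt (i2 a) (i3 a) * dlt (i1 b) (i2 b)
       + dlt (i1 a) (i2 a) * dlt (i3 a) (i1 b) * dlt (i2 b) (i3 b))
  - (2 * (N%:R - 1))^-1 *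
      (dlt (i1 a) (i1 b) * dlt (i2 a) (i3 a) * dlt (i2 b) (i3 b)
       + dlt (i1 a) (i2 a) * dlt (i3 a) (i3 b) * dlt (i1 b) (i2 b)).

Definition Vker (R : rcfType) (N : nat) (a b c d : idx N) : R :=
  dlt (i3 a) (i1 b) * dlt (i3 b) (i1 c) * dlt (i3 c) (i1 d) * dlt (i3 d) (i1 a)
  * dlt (i2 a) (i2 c) * dlt (i2 b) (i2 d).

Definition N32 (R : rcfType) (N : nat) : R := N%:R * Num.sqrt (N%:R).

Definition Apl (R : rcfType) (N : nat) (lam : R) (x y : idx N) : R :=
  lam / N32 R N * \sum_(a : idx N) \sum_(b : idx N) \sum_(c : idx N) \sum_(d : idx N)
    Pker R N x a * Pker R N y b * Pker R N c d * Vker R N a b c d.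

Definition Anp (R : rcfType) (N : nat) (lam : R) (x y : idx N) : R :=
  lam / N32 R N * \sum_(a : idx N) \sum_(b : idx N) \sum_(c : idx N) \sum_(d : idx N)
    Pker R N x a * Pker R N y c * Pker R N b d * Vker R N a b c d.

Definition fT (R : rcfType) (N : nat) : R :=
  (N%:R - 2) * (2 * N%:R + 1) / (2 * N32 R N * (N%:R - 1)).

From HB Require Import structures.
From mathcomp Require Import all_boot all_order all_algebra.
From mathcomp Require Import ring lra.
Import Order.TTheory GRing.Theory Num.Theory.
Local Open Scope ring_scope.

Set Implicit Arguments.
Unset Strict Implicit.

(* Both amplitudes are sums, over indices in 'I_N, of products of Kronecker
   deltas with coefficients in Z[1/2, 1/3, N, 1/(N-1)], which we manipulate
   symbolically, naming the indices by natural numbers.  Summing over an index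
   either contracts a delta containing it, substituting its partner, or, when
   the index is free, multiplies by N.  After the twelve indices of a, b, c, d
   are summed out only deltas between x and y remain; normalising each delta
   pattern and comparing total coefficients pattern by pattern leaves a few
   rational identities in N, valid as soon as N <> 1.  The symbolic computation
   is run by vm_compute, so only its soundness needs a proof. *)

(* [Monom z a b i j s] denotes z 2^-a 3^-b N^i (N-1)^-j prod_{(u,v) in s} dlt u v. *)
Record monom := Monom {
  mcoef : int; mexp2 : nat; mexp3 : nat; mexpN : nat; mexpN1 : nat;
  mdeltas : seq (nat * nat) }.

Definition monom_mul (m1 m2 : monom) : monom :=
  Monom (mcoef m1 * mcoef m2) (mexp2 m1 + mexp2 m2) (mexp3 m1 + mexp3 m2)
        (mexpN m1 + mexpN m2) (mexpN1 m1 + mexpN1 m2) (mdeltas m1 ++ mdeltas m2).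

Definition poly_mul (L1 L2 : seq monom) := [seq monom_mul m1 m2 | m1 <- L1, m2 <- L2].

Definition set_var {N : nat} (e : nat -> 'I_N) (v : nat) (i : 'I_N) : nat -> 'I_N :=
  fun u => if u == v then i else e u.

Definition rename_var (v w : nat) (p : nat * nat) :=
  (if p.1 == v then w else p.1, if p.2 == v then w else p.2).

Fixpoint find_partner (v : nat) (s : seq (nat * nat)) : option (nat * seq (nat * nat)) :=
  match s with
  | [::] => None
  | p :: t => if (p.1 == v) && (p.2 != v) then Some (p.2, t)
              else if (p.2 == v) && (p.1 != v) then Some (p.1, t)
              else if find_partner v t is Some (w, r) then Some (w, p :: r) else None
  end.

Definition monom_sum_var (v : nat) (m : monom) : monom :=
  if find_partner v (mdeltas m) is Some (w, r) then
    Monom (mcoef m) (mexp2 m) (mexp3 m) (mexpN m) (mexpN1 m) (map (rename_var v w) r)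
  else
    Monom (mcoef m) (mexp2 m) (mexp3 m) (mexpN m).+1 (mexpN1 m)
          [seq p <- mdeltas m | ~~ ((p.1 == v) && (p.2 == v))].

Definition poly_sum_vars (vs : seq nat) (L : seq monom) :=
  foldr (fun v => map (monom_sum_var v)) L vs.

(* Gaussian elimination on the equalities encoded by the deltas: each
   nontrivial delta is oriented towards its smaller variable, which is then
   substituted for the larger one everywhere else.  This only serves to make
   equal patterns syntactically equal; soundness does not depend on it.  The
   fuel n must be at least the length of [todo]. *)
Fixpoint solve_deltas (n : nat) (todo sol : seq (nat * nat)) : seq (nat * nat) :=
  if n is n'.+1 then
    if todo is p :: t then
      if p.1 == p.2 then solve_deltas n' t sol else
      let h := maxn p.1 p.2 in let l := minn p.1 p.2 in
      solve_deltas n' (map (rename_var h l) t) ((h, l) :: map (rename_var h l) sol)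
    else sol
  else todo ++ sol.

Definition pair_le (p q : nat * nat) : bool :=
  (p.1 < q.1)%N || ((p.1 == q.1) && (p.2 <= q.2)%N).

Definition monom_canon (m : monom) : monom :=
  Monom (mcoef m) (mexp2 m) (mexp3 m) (mexpN m) (mexpN1 m)
        (sort pair_le (solve_deltas (size (mdeltas m)) (mdeltas m) [::])).

Definition same_exps (m1 m2 : monom) :=
  [&& mexp2 m1 == mexp2 m2, mexp3 m1 == mexp3 m2, mexpN m1 == mexpN m2
    & mexpN1 m1 == mexpN1 m2].

Fixpoint coef_insert (m : monom) (l : seq monom) : seq monom :=
  if l is m' :: l' then
    if same_exps m m'
    then Monom (mcoef m + mcoef m') (mexp2 m') (mexp3 m') (mexpN m') (mexpN1 m') [::] :: l'
    else m' :: coef_insert m l'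
  else [:: m].

Definition coef_collect (l : seq monom) :=
  [seq m <- foldr coef_insert [::] l | mcoef m != 0].

Definition delta_patterns (L1 L2 : seq monom) := undup [seq mdeltas m | m <- L1 ++ L2].

Definition with_pattern (L : seq monom) (k : seq (nat * nat)) :=
  [seq m <- L | mdeltas m == k].

Definition pattern_coefs (L1 L2 : seq monom) :=
  [seq (coef_collect (with_pattern L1 k), coef_collect (with_pattern L2 k))
  | k <- delta_patterns L1 L2].

Lemma dltC (R : rcfType) (N : nat) (i j : 'I_N) : dlt i j = dlt j i :> R.
Proof. by rewrite /dlt eq_sym. Qed.

Lemma sum_dlt (R : rcfType) (N : nat) (j : 'I_N) (F : 'I_N -> R) :
  \sum_(i < N) dlt i j * F i = F j.
Proof.
rewrite (bigD1 j) //= big1 ?addr0 /dlt ?eqxx ?mul1r // => i /negbTE ->.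
by rewrite mul0r.
Qed.

Section Evaluation.
Variables (R : rcfType) (N : nat).
Implicit Types (e : nat -> 'I_N) (m : monom) (L : seq monom) (s : seq (nat * nat)).

Definition monom_coef m : R :=
  (mcoef m)%:~R * (2^-1) ^+ mexp2 m * (3^-1) ^+ mexp3 m * N%:R ^+ mexpN m
  * ((N%:R - 1)^-1) ^+ mexpN1 m.

Definition delta_eval e (p : nat * nat) : R := dlt (e p.1) (e p.2).
Definition deltas_eval e s : R := \prod_(p <- s) delta_eval e p.
Definition monom_eval e m : R := monom_coef m * deltas_eval e (mdeltas m).
Definition poly_eval e L : R := \sum_(m <- L) monom_eval e m.
Definition coef_sum L : R := \sum_(m <- L) monom_coef m.

Fixpoint coefs_agree (G : seq (seq monom * seq monom)) : Prop :=
  if G is g :: G' then coef_sum g.1 = coef_sum g.2 /\ coefs_agree G' else True.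

Fixpoint sum_vars (vs : seq nat) e (F : (nat -> 'I_N) -> R) : R :=
  if vs is v :: vs' then \sum_(i < N) sum_vars vs' (set_var e v i) F else F e.

Lemma poly_eval_mul e L1 L2 :
  poly_eval e (poly_mul L1 L2) = poly_eval e L1 * poly_eval e L2.
Proof.
rewrite /poly_eval /poly_mul big_allpairs_dep mulr_suml; apply: eq_bigr => m1 _.
rewrite mulr_sumr; apply: eq_bigr => m2 _.
rewrite /monom_eval /monom_coef /deltas_eval /= big_cat /= intrM !exprD; ring.
Qed.

Lemma find_partner_some v s w r : find_partner v s = Some (w, r) ->
  w != v /\ forall e, deltas_eval e s = delta_eval e (v, w) * deltas_eval e r.
Proof.
elim: s w r => [|[p1 p2] t IH] w r //=.
case: ifP => [/andP [/eqP -> H] [<- <-]|_].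
  by split=> // e; rewrite /deltas_eval big_cons.
case: ifP => [/andP [/eqP -> H] [<- <-]|_].
  by split=> // e; rewrite /deltas_eval big_cons /delta_eval /= dltC.
case E: (find_partner v t) => [[w' r']|] // [<- <-].
have [Hw Ht] := IH _ _ E; split=> // e.
by rewrite /deltas_eval !big_cons -!/(deltas_eval _ _) Ht mulrCA.
Qed.

Lemma find_partner_none v s : find_partner v s = None ->
  forall p, p \in s -> (p.1 == v) = (p.2 == v).
Proof.
elim: s => [|[p1 p2] t IH] //=.
case: ifP => //; case: ifP => //.
case E: (find_partner v t) => [[w' r']|] // H1 H2 _ p.
rewrite in_cons => /orP [/eqP -> /=|]; last exact: IH.
by move: H1 H2; case: (p1 == v); case: (p2 == v).
Qed.

Lemma deltas_eval_set_free e v s i :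
  (forall p, p \in s -> (p.1 == v) = (p.2 == v)) ->
  deltas_eval (set_var e v i) s
  = deltas_eval e [seq p <- s | ~~ ((p.1 == v) && (p.2 == v))].
Proof.
move=> Hfree; rewrite /deltas_eval big_filter.
rewrite (bigID (fun p => ~~ ((p.1 == v) && (p.2 == v)))) /=.
rewrite [X in _ * X]big1_seq ?mulr1; last first.
  move=> [p1 p2] /andP [/negbNE /andP [/= /eqP -> /eqP ->] _].
  by rewrite /delta_eval /set_var eqxx /dlt eqxx.
rewrite big_seq_cond [RHS]big_seq_cond; apply: eq_bigr => [[p1 p2]] /andP [Hin].
rewrite /delta_eval /set_var /=; move: (Hfree _ Hin) => /=.
by case: (p1 == v); case: (p2 == v).
Qed.

Lemma sum_monom_eval_set_var e v m :
  \sum_(i < N) monom_eval (set_var e v i) m = monom_eval e (monom_sum_var v m).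
Proof.
rewrite /monom_sum_var /monom_eval; case E: (find_partner v (mdeltas m)) => [[w r]|] /=.
  have [Hw Hs] := find_partner_some E.
  under eq_bigr => i _ do
    rewrite Hs /delta_eval /= {1}/set_var eqxx {1}/set_var (negbTE Hw) mulrCA.
  rewrite (sum_dlt (e w) (fun i => monom_coef m * deltas_eval (set_var e v i) r)).
  congr (_ * _); rewrite /deltas_eval big_map; apply: eq_bigr => [[p1 p2]] _.
  by rewrite /delta_eval /set_var /=; case: (p1 == v); case: (p2 == v); rewrite ?eqxx.
have Hfree := find_partner_none E.
under eq_bigr => i _ do rewrite (deltas_eval_set_free _ _ Hfree).
by rewrite sumr_const card_ord -mulr_natr /monom_coef /= exprS; ring.
Qed.

Lemma sum_vars_poly_eval vs e L :
  sum_vars vs e (poly_eval^~ L) = poly_eval e (poly_sum_vars vs L).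
Proof.
elim: vs e => [|v vs IH] e //=; under eq_bigr => i _ do rewrite IH.
rewrite /poly_eval big_map exchange_big /=; apply: eq_bigr => m _.
exact: sum_monom_eval_set_var.
Qed.

Lemma deltas_eval_rename e h l s :
  delta_eval e (h, l) * deltas_eval e s
  = delta_eval e (h, l) * deltas_eval e (map (rename_var h l) s).
Proof.
rewrite /delta_eval /dlt /=; case: eqP => [E|_]; last by rewrite !mul0r.
congr (_ * _); rewrite /deltas_eval big_map; apply: eq_bigr => [[p1 p2]] _.
by rewrite /delta_eval /=; case: eqP => [->|_]; case: eqP => [->|_]; rewrite ?E.
Qed.

Lemma deltas_eval_solve e n todo sol :
  deltas_eval e (solve_deltas n todo sol) = deltas_eval e (todo ++ sol).
Proof.
elim: n todo sol => [|n IH] [|p t] sol //=.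
rewrite {2}/deltas_eval big_cons -/(deltas_eval e (t ++ sol)).
case: ifP => [/eqP E|_]; first by rewrite IH /delta_eval E /dlt eqxx mul1r.
have -> : delta_eval e p = delta_eval e (maxn p.1 p.2, minn p.1 p.2).
  by case: p => p1 p2; rewrite /delta_eval /=; case: (leqP p1 p2) => _ //; apply: dltC.
rewrite IH /deltas_eval big_cat big_cons /= mulrCA -big_cat -!/(deltas_eval _ _).
by rewrite -map_cat -deltas_eval_rename.
Qed.

Lemma poly_eval_canon e L : poly_eval e (map monom_canon L) = poly_eval e L.
Proof.
have sort_eval s : deltas_eval e (sort pair_le s) = deltas_eval e s.
  by apply: perm_big; rewrite perm_sort.
rewrite /poly_eval big_map; apply: eq_bigr => m _.
by rewrite /monom_eval /= sort_eval deltas_eval_solve cats0.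
Qed.

Lemma coef_sum_collect L : coef_sum (coef_collect L) = coef_sum L.
Proof.
have coef_sum_insert m l : coef_sum (coef_insert m l) = monom_coef m + coef_sum l.
  elim: l => [|m' l IH] /=; first by rewrite /coef_sum big_seq1 big_nil addr0.
  case: ifP => [/and4P [/eqP E2 /eqP E3 /eqP EN /eqP EN1]|_].
    by rewrite /coef_sum !big_cons /monom_coef /= E2 E3 EN EN1 intrD; ring.
  by rewrite /coef_sum !big_cons -/(coef_sum _) IH addrCA.
have collect_eq : coef_sum (foldr coef_insert [::] L) = coef_sum L.
  by elim: L => [|m L IH] //=; rewrite coef_sum_insert IH /coef_sum big_cons.
rewrite -collect_eq /coef_collect /coef_sum big_filter.
rewrite [RHS](bigID (fun m => mcoef m != 0)) /= [X in _ = _ + X]big1 ?addr0 //.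
by move=> m /negPn /eqP Hz; rewrite /monom_coef Hz mulr0z !mul0r.
Qed.

Lemma poly_eval_by_pattern e L K :
  uniq K -> {subset [seq mdeltas m | m <- L] <= K} ->
  poly_eval e L = \sum_(k <- K) coef_sum (with_pattern L k) * deltas_eval e k.
Proof.
move=> HK Hsub; transitivity
  (\sum_(k <- K) \sum_(m <- L) (if mdeltas m == k then monom_eval e m else 0)).
  rewrite exchange_big /poly_eval /=; elim: L Hsub => [|m L IH] Hs; first by rewrite !big_nil.
  rewrite !big_cons IH; last by move=> k Hk; apply: Hs; rewrite /= in_cons Hk orbT.
  congr (_ + _); rewrite -big_mkcond -big_filter (eq_filter (fun k => eq_sym _ _)).
  by rewrite filter_pred1_uniq ?big_seq1 //; apply: Hs; rewrite /= mem_head.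
apply: eq_bigr => k _; rewrite /coef_sum /with_pattern big_filter mulr_suml [RHS]big_mkcond.
by apply: eq_bigr => m _; case: (mdeltas m =P k) => [<-|_] //; rewrite mul0r.
Qed.

Lemma coefs_agree_mem (f : seq (nat * nat) -> seq monom * seq monom) K k :
  coefs_agree (map f K) -> k \in K -> coef_sum (f k).1 = coef_sum (f k).2.
Proof.
elim: K => [|k' K IH] //= [H1 H2]; rewrite in_cons => /orP [/eqP -> //|].
exact: IH.
Qed.

Lemma poly_eval_eq_by_coefs e L1 L2 :
  coefs_agree (pattern_coefs (map monom_canon L1) (map monom_canon L2)) ->
  poly_eval e L1 = poly_eval e L2.
Proof.
rewrite -(poly_eval_canon e L1) -(poly_eval_canon e L2) /pattern_coefs.
set C1 := map monom_canon L1; set C2 := map monom_canon L2 => H.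
have HK : uniq (delta_patterns C1 C2) by exact: undup_uniq.
rewrite (poly_eval_by_pattern e HK (K := delta_patterns C1 C2) (L := C1)); last first.
  by move=> k Hk; rewrite /delta_patterns mem_undup map_cat mem_cat Hk.
rewrite (poly_eval_by_pattern e HK (L := C2)); last first.
  by move=> k Hk; rewrite /delta_patterns mem_undup map_cat mem_cat Hk orbT.
apply: eq_big_seq => k Hk; congr (_ * _).
by have := coefs_agree_mem H Hk; rewrite /= !coef_sum_collect.
Qed.

End Evaluation.

Lemma sum_idx (V : nmodType) (N : nat) (G : idx N -> V) :
  \sum_(a : idx N) G a = \sum_(i < N) \sum_(j < N) \sum_(k < N) G ((i, j), k).
Proof.
rewrite pair_bigA (pair_bigA _ (fun p k => G ((p.1, p.2), k))) /=.
by apply: eq_bigr => [[[i j] k]] _.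
Qed.

Definition set_idx {N : nat} (e : nat -> 'I_N) (v1 v2 v3 : nat) (a : idx N) :=
  set_var (set_var (set_var e v1 (i1 a)) v2 (i2 a)) v3 (i3 a).

Lemma sum_vars_idx (R : rcfType) (N : nat) v1 v2 v3 vs (e : nat -> 'I_N) F :
  sum_vars [:: v1, v2, v3 & vs] e F
  = \sum_(a : idx N) sum_vars vs (set_idx e v1 v2 v3 a) F :> R.
Proof. by rewrite sum_idx. Qed.

(* The variables 0-2 carry x, 3-5 carry y, and 6-8, 9-11, 12-14, 15-17 carry
   the summed multi-indices a, b, c, d. *)
Definition env_xy {N : nat} (x y : idx N) : nat -> 'I_N :=
  set_idx (set_idx (fun _ => i1 x) 0 1 2 x) 3 4 5 y.

Definition summed_vars : seq nat := [:: 6; 7; 8; 9; 10; 11; 12; 13; 14; 15; 16; 17]%N.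

Definition Pker_poly (v1 v2 v3 w1 w2 w3 : nat) : seq monom :=
  [:: Monom 1 0 1 0 0 [:: (v1, w1); (v2, w2); (v3, w3)];
      Monom (-1) 0 1 0 0 [:: (v1, w3); (v2, w2); (v3, w1)];
      Monom 1 1 1 0 0 [:: (v1, w2); (v2, w1); (v3, w3)];
      Monom 1 1 1 0 0 [:: (v1, w1); (v2, w3); (v3, w2)];
      Monom (-1) 1 1 0 0 [:: (v1, w2); (v2, w3); (v3, w1)];
      Monom (-1) 1 1 0 0 [:: (v1, w3); (v2, w1); (v3, w2)];
      Monom 1 1 0 0 1 [:: (v1, w3); (v2, v3); (w1, w2)];
      Monom 1 1 0 0 1 [:: (v1, v2); (v3, w1); (w2, w3)];
      Monom (-1) 1 0 0 1 [:: (v1, w1); (v2, v3); (w2, w3)];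
      Monom (-1) 1 0 0 1 [:: (v1, v2); (v3, w3); (w1, w2)] ].

Definition Vker_poly : seq monom :=
  [:: Monom 1 0 0 0 0 [:: (8, 9); (11, 12); (14, 15); (17, 6); (7, 13); (10, 16)]].

Definition planar_integrand : seq monom :=
  poly_mul (poly_mul (poly_mul (Pker_poly 0 1 2 6 7 8) (Pker_poly 3 4 5 9 10 11))
                     (Pker_poly 12 13 14 15 16 17)) Vker_poly.

Definition nonplanar_integrand : seq monom :=
  poly_mul (poly_mul (poly_mul (Pker_poly 0 1 2 6 7 8) (Pker_poly 3 4 5 12 13 14))
                     (Pker_poly 9 10 11 15 16 17)) Vker_poly.

(* (N-2)(4N-1)/(12(N-1)) and (N^2-4)/(3(N-1)), expanded in the monomial basis. *)
Definition planar_coef : seq monom :=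
  [:: Monom 4 2 1 2 1 [::]; Monom (-9) 2 1 1 1 [::]; Monom 2 2 1 0 1 [::]].

Definition nonplanar_coef : seq monom :=
  [:: Monom 1 0 1 2 1 [::]; Monom (-4) 0 1 0 1 [::]].

Section TadpoleSums.
Variables (R : rcfType) (N : nat).
Implicit Types (e : nat -> 'I_N) (x y : idx N).

Lemma Pker_poly_eval e v1 v2 v3 w1 w2 w3 x a :
  e v1 = i1 x -> e v2 = i2 x -> e v3 = i3 x ->
  e w1 = i1 a -> e w2 = i2 a -> e w3 = i3 a ->
  Pker R N x a = poly_eval R e (Pker_poly v1 v2 v3 w1 w2 w3).
Proof.
move=> Ex1 Ex2 Ex3 Ea1 Ea2 Ea3.
rewrite /poly_eval /monom_eval /deltas_eval /monom_coef /delta_eval /=.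
rewrite !big_cons !big_nil /= Ex1 Ex2 Ex3 Ea1 Ea2 Ea3 /Pker.
have -> : (6 : R)^-1 = 2^-1 * 3^-1 by rewrite -invfM -natrM.
rewrite invfM; ring.
Qed.

Lemma Vker_poly_eval e a b c d :
  e 6 = i1 a -> e 7 = i2 a -> e 8 = i3 a ->
  e 9 = i1 b -> e 10 = i2 b -> e 11 = i3 b ->
  e 12 = i1 c -> e 13 = i2 c -> e 14 = i3 c ->
  e 15 = i1 d -> e 16 = i2 d -> e 17 = i3 d ->
  Vker R N a b c d = poly_eval R e Vker_poly.
Proof.
move=> Ea1 Ea2 Ea3 Eb1 Eb2 Eb3 Ec1 Ec2 Ec3 Ed1 Ed2 Ed3.
rewrite /poly_eval /monom_eval /deltas_eval /monom_coef /delta_eval /=.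
rewrite !big_cons !big_nil /= Ea1 Ea2 Ea3 Eb1 Eb2 Eb3 Ec1 Ec2 Ec3 Ed1 Ed2 Ed3 /Vker.
ring.
Qed.

Lemma planar_sum_poly x y :
  \sum_(a : idx N) \sum_(b : idx N) \sum_(c : idx N) \sum_(d : idx N)
    Pker R N x a * Pker R N y b * Pker R N c d * Vker R N a b c d
  = poly_eval R (env_xy x y) (poly_sum_vars summed_vars planar_integrand).
Proof.
rewrite -sum_vars_poly_eval sum_vars_idx; apply: eq_bigr => a _.
rewrite sum_vars_idx; apply: eq_bigr => b _; rewrite sum_vars_idx; apply: eq_bigr => c _.
rewrite sum_vars_idx; apply: eq_bigr => d _ /=; rewrite !poly_eval_mul.
rewrite -(@Pker_poly_eval _ 0 1 2 6 7 8 x a) // -(@Pker_poly_eval _ 3 4 5 9 10 11 y b) //.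
by rewrite -(@Pker_poly_eval _ 12 13 14 15 16 17 c d) // -(@Vker_poly_eval _ a b c d).
Qed.

Lemma nonplanar_sum_poly x y :
  \sum_(a : idx N) \sum_(b : idx N) \sum_(c : idx N) \sum_(d : idx N)
    Pker R N x a * Pker R N y c * Pker R N b d * Vker R N a b c d
  = poly_eval R (env_xy x y) (poly_sum_vars summed_vars nonplanar_integrand).
Proof.
rewrite -sum_vars_poly_eval sum_vars_idx; apply: eq_bigr => a _.
rewrite sum_vars_idx; apply: eq_bigr => b _; rewrite sum_vars_idx; apply: eq_bigr => c _.
rewrite sum_vars_idx; apply: eq_bigr => d _ /=; rewrite !poly_eval_mul.
rewrite -(@Pker_poly_eval _ 0 1 2 6 7 8 x a) // -(@Pker_poly_eval _ 3 4 5 12 13 14 y c) //.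
by rewrite -(@Pker_poly_eval _ 9 10 11 15 16 17 b d) // -(@Vker_poly_eval _ a b c d).
Qed.

Lemma natr_sub1_neq0 : (2 <= N)%N -> N%:R - 1 != 0 :> R.
Proof. by move=> hN; rewrite subr_eq0 pnatr_eq1; apply: contraTneq hN => ->. Qed.

Ltac coefs_agree_by_field hN1 :=
  match goal with |- @coefs_agree _ _ ?G =>
    let G' := eval vm_compute in G in
    have -> : G = G' by vm_compute; reflexivity
  end;
  rewrite /= /coef_sum /monom_coef /= !big_cons !big_nil /=;
  repeat split; field; exact: hN1.

Lemma planar_sum_poly_contract e : (2 <= N)%N ->
  poly_eval R e (poly_sum_vars summed_vars planar_integrand)
  = poly_eval R e (poly_mul planar_coef (Pker_poly 0 1 2 3 4 5)).
Proof.
move=> /natr_sub1_neq0 hN1; apply: poly_eval_eq_by_coefs.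
coefs_agree_by_field hN1.
Qed.

Lemma nonplanar_sum_poly_contract e : (2 <= N)%N ->
  poly_eval R e (poly_sum_vars summed_vars nonplanar_integrand)
  = poly_eval R e (poly_mul nonplanar_coef (Pker_poly 0 1 2 3 4 5)).
Proof.
move=> /natr_sub1_neq0 hN1; apply: poly_eval_eq_by_coefs.
coefs_agree_by_field hN1.
Qed.

Lemma planar_tadpole_sum x y : (2 <= N)%N ->
  \sum_(a : idx N) \sum_(b : idx N) \sum_(c : idx N) \sum_(d : idx N)
    Pker R N x a * Pker R N y b * Pker R N c d * Vker R N a b c d
  = (N%:R - 2) * (4 * N%:R - 1) / (12 * (N%:R - 1)) * Pker R N x y.
Proof.
move=> hN; rewrite planar_sum_poly planar_sum_poly_contract // poly_eval_mul.
rewrite -(@Pker_poly_eval _ 0 1 2 3 4 5 x y) //.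
rewrite /poly_eval /monom_eval /monom_coef /deltas_eval /= !big_cons !big_nil /=.
by field; rewrite natr_sub1_neq0.
Qed.

Lemma nonplanar_tadpole_sum x y : (2 <= N)%N ->
  \sum_(a : idx N) \sum_(b : idx N) \sum_(c : idx N) \sum_(d : idx N)
    Pker R N x a * Pker R N y c * Pker R N b d * Vker R N a b c d
  = (N%:R ^+ 2 - 4) / (3 * (N%:R - 1)) * Pker R N x y.
Proof.
move=> hN; rewrite nonplanar_sum_poly nonplanar_sum_poly_contract // poly_eval_mul.
rewrite -(@Pker_poly_eval _ 0 1 2 3 4 5 x y) //.
rewrite /poly_eval /monom_eval /monom_coef /deltas_eval /= !big_cons !big_nil /=.
by field; rewrite natr_sub1_neq0.
Qed.

End TadpoleSums.

Lemma N32_gt0 (R : rcfType) (N : nat) : (0 < N)%N -> 0 < N32 R N.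
Proof. by move=> hN; rewrite /N32 mulr_gt0 ?sqrtr_gt0 ?ltr0n. Qed.

Lemma Apl_closed (R : rcfType) (N : nat) (lam : R) (x y : idx N) : (3 <= N)%N ->
  Apl R N lam x y
  = lam * ((N%:R - 2) * (4 * N%:R - 1) / (12 * N32 R N * (N%:R - 1))) * Pker R N x y.
Proof.
move=> hN; have hN2 : (2 <= N)%N := ltnW hN.
rewrite /Apl planar_tadpole_sum //.
by field; rewrite natr_sub1_neq0 // gt_eqF // N32_gt0 // ltnW.
Qed.

Lemma Anp_closed (R : rcfType) (N : nat) (lam : R) (x y : idx N) : (3 <= N)%N ->
  Anp R N lam x y
  = lam * ((N%:R ^+ 2 - 4) / (3 * N32 R N * (N%:R - 1))) * Pker R N x y.
Proof.
move=> hN; have hN2 : (2 <= N)%N := ltnW hN.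
rewrite /Anp nonplanar_tadpole_sum //.
by field; rewrite natr_sub1_neq0 // gt_eqF // N32_gt0 // ltnW.
Qed.

Lemma fT_le_inv_sqrt (R : rcfType) (M : nat) : (3 <= M)%N ->
  `|fT R M| <= (Num.sqrt M%:R)^-1.
Proof.
move=> hM; have hM0 : (0 < M)%N by apply: leq_trans hM.
have hs : 0 < Num.sqrt (M%:R : R) by rewrite sqrtr_gt0 ltr0n.
have hm : (3 : R) <= M%:R by rewrite ler_nat.
have hden : 0 < 2 * N32 R M * (M%:R - 1).
  by rewrite !mulr_gt0 ?N32_gt0 //; lra.
have hf0 : 0 <= fT R M by rewrite /fT divr_ge0 ?ltW //; apply: mulr_gt0; lra.
rewrite ger0_norm // -subr_ge0.
have -> : (Num.sqrt (M%:R : R))^-1 - fT R M = (M%:R + 2) / (2 * N32 R M * (M%:R - 1)).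
  rewrite /fT /N32; field.
  by rewrite (gt_eqF hs) pnatr_eq0 -lt0n hM0 andbT gt_eqF //; lra.
by rewrite divr_ge0 ?ltW //; lra.
Qed.

Theorem mainTheorem4 (R : rcfType) (N : nat) (hN : (3 <= N)%N) (lam : R) :
  (forall x y : idx N,
     Apl R N lam x y
     = lam * ((N%:R - 2) * (4 * N%:R - 1) / (12 * N32 R N * (N%:R - 1))) * Pker R N x y)
  /\ (forall x y : idx N,
     Anp R N lam x y
     = lam * ((N%:R ^+ 2 - 4) / (3 * N32 R N * (N%:R - 1))) * Pker R N x y)
  /\ (forall x y : idx N,
     2 * Apl R N lam x y + Anp R N lam x y = lam * fT R N * Pker R N x y)
  /\ (exists C : R, forall M : nat, (3 <= M)%N ->
        `|fT R M| <= C / Num.sqrt (M%:R)).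
Proof.
have hN2 : (2 <= N)%N := ltnW hN.
have hN1 : N%:R - 1 != 0 :> R by rewrite natr_sub1_neq0.
have h32 : N32 R N != 0 by rewrite gt_eqF // N32_gt0 // ltnW.
split; first by move=> x y; exact: Apl_closed.
split; first by move=> x y; exact: Anp_closed.
split; first by move=> x y; rewrite Apl_closed // Anp_closed // /fT; field; rewrite hN1 h32.
by exists 1 => M hM; rewrite mul1r; exact: fT_le_inv_sqrt.
Qed.
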